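(* For all integers $h \ge 2$, we have $(h+1)^2 \in \mathcal{R}_{\mathbf{Z}}(h,4)$, and for all integers $i_0 \in [0,h-2]$ and $r \in [0,1]$, \[ (i_0+1)\big(2(h-i_0) - r\big) + (h-i_0)^2 \in \mathcal{R}_{\mathbf{Z}}(h,4). \]
   Context: For a positive integer $h$ and a finite set $A$ of integers, $hA$ denotes the set of all sums $a_1+\cdots+a_h$ with $a_1,\ldots,a_h \in A$ (not necessarily distinct). The sumset size set is $\mathcal{R}_{\mathbf{Z}}(h,k) = \{ |hA| : A \subseteq \mathbf{Z},\ |A| = k\}$. For real $u,v$, $[u,v] = \{n \in \mathbf{Z} : u \le n \le v\}$. *)

From mathcomp Require Import all_boot all_order all_algebra.
Set Implicit Arguments. Unset Strict Implicit. Unset Printing Implicit Defensive.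
Import Order.TTheory GRing.Theory Num.Theory.
Local Open Scope ring_scope.

(* h-fold sumset hA of a finite set A of integers (given as a duplicate-free
   list), returned as a list (possibly with repetitions) of all sums
   a_1 + ... + a_h with a_i in A. *)
Fixpoint sumset (h : nat) (A : seq int) : seq int :=
  match h with
  | O => [:: 0]
  | S h' => [seq a + s | a <- A, s <- sumset h' A]
  end.

Definition card_sumset (h : nat) (A : seq int) : nat := size (undup (sumset h A)).

Definition in_RZ (h k m : nat) : Prop :=
  exists A : seq int, uniq A /\ size A = k /\ card_sumset h A = m.

(* For A = {0, 1, 2, c}, hA consists of the sums y + x c with x <= h and
   y <= 2 (h - x).  Written in base c as q c + i with 0 <= i < c, such a sum
   lies in hA iff q <= h and i <= 2 (h - q): as c >= 2, every multiple of c
   in y may be traded for a summand c.  Hence |hA| = sum_(j <= h) min(c, 2j+1),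
   which is (h+1)^2 for c = 2h+1 and (h-i0)^2 + (i0+1) c for c = 2(h-i0) - r. *)

From mathcomp Require Import all_boot all_order all_algebra zify.

Section ZeroOneTwoC.

Variable c : nat.

Local Notation A := [:: 0%R; 1%R; 2%R; (c : int)].

Lemma mem_sumset_012c h (s : int) :
  s \in sumset h A <->
  exists x y : nat, [/\ x <= h, y <= 2 * (h - x) & s = (y + x * c)%N].
Proof.
elim: h s => [|h IH] s.
  rewrite inE; split=> [/eqP ->|[x [y [le_xh le_y ->]]]]; first by exists 0, 0.
  by apply/eqP; lia.
split.
  case/allpairsP=> -[a t] /= [Aa /IH [x [y [le_xh le_y ->]]] ->].
  move: Aa; rewrite !inE => /or4P[] /eqP ->.
  - by exists x, y; split; lia.
  - by exists x, y.+1; split; lia.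
  - by exists x, y.+2; split; lia.
  - by exists x.+1, y; split; lia.
case=> x [y [le_xh le_y ->]]; apply/allpairsP.
have [lt_xh | x_eq] : x <= h \/ x = h.+1 by lia.
  have [a [Aa le_ay le_y']] :
      exists a : nat, [/\ (a : int) \in A, a <= y & y - a <= 2 * (h - x)].
    case: y le_y => [|[|y]] le_y; [exists 0 | exists 1 | exists 2]; split=> //; lia.
  exists ((a : int), ((y - a + x * c)%N : int)); split=> //=; last lia.
  by apply/IH; exists x, (y - a).
exists ((c : int), ((h * c)%N : int)).
split; rewrite /= ?inE ?eqxx ?orbT //; last lia.
by apply/IH; exists h, 0; split; lia.
Qed.

Hypothesis c_ge2 : 2 <= c.

Definition block_sums h : seq nat :=
  [seq q * c + i | q <- iota 0 h.+1, i <- iota 0 (minn c (2 * (h - q)).+1)].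

Lemma block_sums_uniq h : uniq (block_sums h).
Proof.
have c_gt0 : 0 < c by lia.
have quotient_eq q i : i < c -> (q * c + i) %/ c = q.
  by move=> lt_ic; rewrite divnMDl // divn_small ?addn0.
apply: allpairs_uniq_dep => [||u v]; first exact: iota_uniq.
  by move=> q _; exact: iota_uniq.
case/allpairsPdep=> q [i [_ + ->]]; rewrite mem_iota => lt_i.
case/allpairsPdep=> p [j [_ + ->]]; rewrite mem_iota => lt_j /= eq_sums.
have eq_qp : q = p.
  rewrite -(quotient_eq q i); last lia.
  by rewrite eq_sums quotient_eq //; lia.
by subst p; rewrite (addnI eq_sums).
Qed.

Lemma mem_block_sums h n :
  n \in block_sums h <->
  exists x y : nat, [/\ x <= h, y <= 2 * (h - x) & n = y + x * c].
Proof.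
split=> [/allpairsPdep [q [i []]] | [x [y [le_xh le_y ->]]]].
  rewrite !mem_iota => lt_q lt_i ->.
  by exists q, i; split; lia.
have y_eq := divn_eq y c; have lt_r := ltn_pmod y (ltnW c_ge2).
have le_q : 2 * (y %/ c) <= y %/ c * c by rewrite mulnC leq_mul2l c_ge2 orbT.
apply/allpairsPdep; exists (x + y %/ c), (y %% c).
move: (y %/ c) (y %% c) y_eq lt_r le_q => q r *.
rewrite !mem_iota; split; lia.
Qed.

Lemma size_block_sums h :
  size (block_sums h) = \sum_(0 <= j < h.+1) minn c (2 * j).+1.
Proof.
rewrite size_allpairs_dep sumnE big_map big_nat_rev add0n.
apply: (@eq_big_nat _ _ _ 0 h.+1) => q lt_q; rewrite size_iota; congr minn; lia.
Qed.

Lemma card_sumset_012c h :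
  card_sumset h A = \sum_(0 <= j < h.+1) minn c (2 * j).+1.
Proof.
rewrite /card_sumset -size_block_sums -(size_map Posz); apply: perm_size.
apply: uniq_perm; first exact: undup_uniq.
  by rewrite map_inj_uniq ?block_sums_uniq // => ? ? [].
move=> z; rewrite mem_undup; apply/idP/idP.
  case/mem_sumset_012c=> x [y [le_xh le_y ->]].
  by apply: map_f; apply/mem_block_sums; exists x, y.
case/mapP=> n /mem_block_sums [x [y [le_xh le_y ->]]] ->.
by apply/mem_sumset_012c; exists x, y.
Qed.

End ZeroOneTwoC.

Lemma sum_minn_odd c m n : 2 * m <= c.+1 -> c <= (2 * m).+1 -> m <= n ->
  \sum_(0 <= j < n) minn c (2 * j).+1 = m ^ 2 + (n - m) * c.
Proof.
move=> le_m le_c /subnKC <-; rewrite addKn.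
have sum_odd k : k <= m -> \sum_(0 <= j < k) minn c (2 * j).+1 = k ^ 2.
  elim: k => [|k IH] le_km; first by rewrite big_geq.
  by rewrite big_nat_recr //= IH; lia.
elim: (n - m) => [|k IH]; first by rewrite addn0 mul0n addn0 sum_odd.
by rewrite addnS big_nat_recr //= IH; lia.
Qed.

Lemma in_RZ_sum_minn_odd h c : 3 <= c ->
  in_RZ h 4 (\sum_(0 <= j < h.+1) minn c (2 * j).+1).
Proof.
move=> c_ge3; exists [:: 0%R; 1%R; 2%R; (c : int)].
split; first by rewrite /= !inE; lia.
by split=> //; apply: card_sumset_012c; lia.
Qed.

Theorem mainTheorem8 (h : nat) : (2 <= h)%N ->
  in_RZ h 4 ((h + 1) ^ 2)%N /\
  (forall i0 r : nat, (i0 <= h - 2)%N -> (r <= 1)%N ->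
     in_RZ h 4 ((i0 + 1) * (2 * (h - i0) - r) + (h - i0) ^ 2)%N).
Proof.
move=> h_ge2; split=> [|i0 r le_i0 le_r].
  rewrite (_ : (h + 1) ^ 2 = \sum_(0 <= j < h.+1) minn (2 * h).+1 (2 * j).+1).
    by apply: in_RZ_sum_minn_odd; lia.
  by rewrite (@sum_minn_odd _ (h.+1)) ?subnn; lia.
set c := 2 * (h - i0) - r.
rewrite (_ : _ + _ = \sum_(0 <= j < h.+1) minn c (2 * j).+1).
  by apply: in_RZ_sum_minn_odd; lia.
by rewrite (@sum_minn_odd _ (h - i0)); lia.
Qed.
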